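(* Let $k\ge2$, let $\Pi\subsetneq\Sigma_k$ be a proper subshift, and let $T:\Pi\to\Sigma_k$ be the map constructed below. Then for every $y\in\Pi$, $V(T(y),\sigma)=V(y,\sigma)$.
   Context: $\Sigma_k=\{0,\dots,k-1\}^{\mathbb{N}}$ with metric $d(x,y)=\sum_{n\ge1}\delta(x_n,y_n)/2^n$ ($\delta(a,b)=0$ if $a=b$, $1$ otherwise) and shift $\sigma$. A subshift is a nonempty closed $\sigma$-invariant subset; a finite word is contained in $\Pi$ if it is a prefix of some point of $\Pi$. Construction of $T$: enumerate all finite words contained in $\Pi$ as $C_1,C_2,\dots$; fix a finite word $A_1$ not contained in $\Pi$; for $y\in\Pi$ let $Y_n$ be its first $n$ symbols; $B_n=C_nY_n\cdots Y_n$ ($Y_n$ repeated $|A_n|^2$ times), $A_{n+1}=A_nB_nA_n$; $T(y)$ is the point having every $A_n$ as prefix; the construction requires $|C_n|=o(|A_n|)$. $V(x,\sigma)$ denotes the set of weak$^*$ limit points of the empirical measures $\frac1n\sum_{i=0}^{n-1}\delta_{\sigma^i(x)}$. *)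

From HB Require Import structures.
From mathcomp Require Import all_boot all_order all_algebra.
From mathcomp Require Import all_classical all_reals all_analysis.
Set Implicit Arguments. Unset Strict Implicit. Unset Printing Implicit Defensive.
Import Order.TTheory GRing.Theory Num.Theory.
Import numFieldNormedType.Exports.
Local Open Scope classical_set_scope.
Local Open Scope ring_scope.

(* Alphabet {0,...,k-1}.  It is written 'I_(k.-1.+1) (which equals 'I_k for
   k >= 1, the only case used: the theorem assumes k >= 2) so that it is
   canonically inhabited (pointed), as required by the measurable-type
   structures of MathComp-Analysis. *)
Definition Alph (k : nat) := 'I_(k.-1.+1).
HB.instance Definition _ k := Choice.on (Alph k).
HB.instance Definition _ k := isPointed.Build (Alph k) ord0.
Definition Sigma (k : nat) := nat -> Alph k.
HB.instance Definition _ k := Pointed.on (Sigma k).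

Definition shift (k : nat) (x : Sigma k) : Sigma k := fun n => x n.+1.

(* The metric d(x,y) = sum_{n>=1} delta(x_n,y_n)/2^n ; positions of points are
   indexed from 0 here, so position n carries weight 1/2^(n+1). *)
Definition dist (R : realType) (k : nat) (x y : Sigma k) : R :=
  limn (fun N : nat => (\sum_(n < N) ((x n != y n)%:R / 2 ^+ n.+1) : R)).

Definition dopen (R : realType) (k : nat) (U : set (Sigma k)) : Prop :=
  forall x, U x -> exists2 e : R, 0 < e & forall y, @dist R k x y < e -> U y.

Definition dclosed (R : realType) (k : nat) (P : set (Sigma k)) : Prop :=
  forall x, (forall e : R, 0 < e -> exists2 y, P y & @dist R k x y < e) -> P x.

Definition dcontinuous (R : realType) (k : nat) (f : Sigma k -> R) : Prop :=
  forall x (e : R), 0 < e ->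
    exists2 d : R, 0 < d & forall y, @dist R k x y < d -> `|f x - f y| < e.

Definition subshift (R : realType) (k : nat) (P : set (Sigma k)) : Prop :=
  [/\ P !=set0, dclosed R P & forall x, P x -> P (shift x)].

Definition SigmaB (R : realType) (k : nat) := g_sigma_algebraType (@dopen R k).

Definition prefix_of (k : nat) (w : seq (Alph k)) (x : Sigma k) : Prop :=
  forall i, (i < size w)%N -> x i = nth (ord0 : Alph k) w i.

Definition contained (k : nat) (P : set (Sigma k)) (w : seq (Alph k)) : Prop :=
  exists2 x, P x & prefix_of w x.

Definition firstn (k : nat) (y : Sigma k) (n : nat) : seq (Alph k) := mkseq y n.

(* The words A_n of the construction, shifted by one: Aword C A1 y m = A_{m+1},
   where C m = C_{m+1}.  A_{n+1} = A_n B_n A_n, B_n = C_n Y_n^{|A_n|^2}. *)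
Fixpoint Aword (k : nat) (C : nat -> seq (Alph k)) (A1 : seq (Alph k))
    (y : Sigma k) (m : nat) : seq (Alph k) :=
  match m with
  | 0 => A1
  | m'.+1 =>
    let A := Aword C A1 y m' in
    A ++ (C m' ++ flatten (nseq (size A ^ 2) (firstn y m'.+1))) ++ A
  end.

(* (1/n) sum_{i<n} f(sigma^i x) = integral of f against the empirical measure
   (1/n) sum_{i<n} delta_{sigma^i x}. *)
Definition empirical_avg (R : realType) (k : nat) (f : Sigma k -> R)
    (x : Sigma k) (n : nat) : R :=
  (n%:R)^-1 * \sum_(i < n) f (iter i (@shift k) x).

(* V(x,sigma): weak* limit points (subsequential limits) of the empirical
   measures, as Borel probability measures on Sigma_k. Weak* convergence:
   integrals of every continuous real function converge. *)
Definition Vset (R : realType) (k : nat) (x : Sigma k)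
    : set (probability (SigmaB R k) R) :=
  [set mu : probability (SigmaB R k) R | exists phi : nat -> nat, (forall j, (phi j < phi j.+1)%N) /\
     forall f : Sigma k -> R, dcontinuous f ->
       (fun j => (empirical_avg f x (phi j))%:E) @ \oo -->
         (\int[mu]_z ((f : SigmaB R k -> R) z)%:E)%E].

From Pilot Require Import Defs.
From HB Require Import structures.
From mathcomp Require Import all_boot all_order all_algebra.
From mathcomp Require Import all_classical all_reals all_analysis.
From mathcomp Require Import ring lra zify.
Set Implicit Arguments. Unset Strict Implicit. Unset Printing Implicit Defensive.
Import Order.TTheory GRing.Theory Num.Theory.
Import numFieldNormedType.Exports.
Local Open Scope classical_set_scope.
Local Open Scope ring_scope.

(* Write L_n = |A_n|.  The word A_{n+1} = A_n C_n Y_n^(L_n^2) A_n, a prefix of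
   T y, consists mostly of L_n^2 copies of Y_n, the first n symbols of y.  By
   uniform continuity of f, along each copy the orbit of T y shadows the orbit
   of y except in its last few steps, so every Birkhoff average of f along T y
   of a length t with L_n <= t < L_{n+1} is within O(1/n), plus a multiple of
   the relative lengths |C_(n-1)|/L_(n-1) and |C_n|/L_n, of the Birkhoff
   average of f along y of length n.  Hence limit points of the
   empirical measures of T y along times t_j are limit points of those of y
   along the window indices n_j of t_j, and conversely along the times L_n. *)

Lemma iter_shiftE k (x : Sigma k) i n : iter i (@Defs.shift k) x n = x (n + i)%N.
Proof. by elim: i n => [|i IH] n /=; rewrite ?addn0 // /Defs.shift IH addnS. Qed.

Lemma sum_inv_pow2 (R : realFieldType) n N : (n <= N)%N ->
  \sum_(n <= i < N) ((2 : R) ^+ i.+1)^-1 = (2 ^+ n)^-1 - (2 ^+ N)^-1.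
Proof.
elim: N => [|N IH]; first by rewrite leqn0 => /eqP ->; rewrite big_geq // subrr.
rewrite leq_eqVlt => /orP [/eqP <-|]; first by rewrite big_geq // subrr.
rewrite ltnS => nN; rewrite big_nat_recr //= IH // exprS invfM.
set u := (2 ^+ N)^-1; lra.
Qed.

Lemma dist_le_agree (R : realType) k (x a : Sigma k) n :
  (forall i, (i < n)%N -> x i = a i) -> @dist R k x a <= (2 ^+ n)^-1.
Proof.
move=> xa; pose t i : R := (x i != a i)%:R / 2 ^+ i.+1.
have t_ge0 i : 0 <= t i by rewrite divr_ge0 ?exprn_ge0.
have sumE : (fun N => \sum_(i < N) t i) = (fun N => \sum_(0 <= i < N) t i).
  by apply/funext => N; rewrite big_mkord.
have u_nd : nondecreasing_seq (fun N => \sum_(0 <= i < N) t i).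
  exact: nondecreasing_series.
have u_le N : \sum_(0 <= i < N) t i <= (2 ^+ n)^-1.
  apply: le_trans (u_nd _ (maxn N n) (leq_maxl N n)) _.
  rewrite (big_cat_nat (leq0n n) (leq_maxr N n)) /= big1_seq ?add0r; last first.
    by move=> i; rewrite mem_index_iota => /andP [_ /xa xai]; rewrite /t xai eqxx mul0r.
  apply: le_trans (_ : \sum_(n <= i < maxn N n) ((2 : R) ^+ i.+1)^-1 <= _).
    by apply: ler_sum => i _; rewrite ler_pdivrMr ?exprn_gt0 // mulVf ?expf_neq0 //; case: eqP.
  by rewrite sum_inv_pow2 ?leq_maxr // gerBl invr_ge0 exprn_ge0.
rewrite /dist sumE; apply: limr_le; last exact: nearW.
by apply: nondecreasing_is_cvgn => //; exists (2 ^+ n)^-1 => _ [N _ <-].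
Qed.

Lemma exists_inv_pow2_lt (R : realType) (d : R) : 0 < d -> exists n, (2 ^+ n)^-1 < d.
Proof.
move=> d_gt0; have /ltW/archi_boundP : 0 < d^-1 by rewrite invr_gt0.
set n := Num.Def.archi_bound _ => dn; exists n.
have n_le : (n%:R : R) <= 2 ^+ n by rewrite -natrX ler_nat ltnW // ltn_expl.
by rewrite invf_plt ?posrE ?exprn_gt0 //; exact: lt_le_trans dn n_le.
Qed.

Lemma fan_theorem k (P : seq (Alph k) -> Prop) :
  (forall w, (forall a, P (rcons w a)) -> P w) ->
  (forall x : Sigma k, exists n, P (firstn x n)) -> P [::].
Proof.
move=> P_ext P_bar; apply: contrapT => nP.
have next_ex w : exists a : Alph k, ~ P w -> ~ P (rcons w a).
  have [Pw|nPw] := pselect (P w); first by exists ord0.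
  have /existsNP [a Pwa] : ~ (forall a, P (rcons w a)) by move/P_ext.
  by exists a.
have [next nextP] := choice next_ex.
pose x : Sigma k := fun n => next (iter n (fun w => rcons w (next w)) [::]).
have nPx n : ~ P (firstn x n).
  suff -> : firstn x n = iter n (fun w => rcons w (next w)) [::].
    by elim: n => //= n IH; exact: nextP IH.
  by elim: n => //= n IH; rewrite /firstn mkseqS -/(firstn x n) IH.
by have [n] := P_bar x; exact: nPx.
Qed.

Lemma prefix_of_rcons k (w : seq (Alph k)) (a : Sigma k) :
  prefix_of w a -> prefix_of (rcons w (a (size w))) a.
Proof.
move=> wa i; rewrite size_rcons ltnS leq_eqVlt nth_rcons.
by case/orP => [/eqP ->|lt_iw]; rewrite ?ltnn ?eqxx // lt_iw wa.
Qed.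

Lemma dcontinuous_cylinder (R : realType) k (f : Sigma k -> R) (x : Sigma k) (e : R) :
  dcontinuous f -> 0 < e ->
  exists n, forall a, prefix_of (firstn x n) a -> `|f x - f a| < e.
Proof.
move=> fc e_gt0; have [d d_gt0 fd] := fc x e e_gt0.
have [n nd] := exists_inv_pow2_lt d_gt0.
exists n => a xa; apply/fd/(le_lt_trans _ nd)/dist_le_agree => i lt_in.
by rewrite xa ?size_mkseq // nth_mkseq.
Qed.

Lemma dcontinuous_unif (R : realType) k (f : Sigma k -> R) (e : R) :
  dcontinuous f -> 0 < e -> exists K, forall a b : Sigma k,
    (forall i, (i < K)%N -> a i = b i) -> `|f a - f b| <= e.
Proof.
move=> fc e_gt0.
pose P w := exists K, forall a b, prefix_of w a -> prefix_of w b ->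
  (forall i, (i < K)%N -> a i = b i) -> `|f a - f b| <= e.
suff [K PK] : P [::] by exists K => a b; apply: PK.
apply: fan_theorem => [w Pw|x].
  have [K KP] := choice Pw.
  exists (\max_(c : Alph k) K c + (size w).+1)%N => a b wa wb ab.
  have ab_w : a (size w) = b (size w) by apply: ab; rewrite addnS ltnS leq_addl.
  apply: (KP (a (size w))); [exact: prefix_of_rcons|rewrite ab_w; exact: prefix_of_rcons|].
  move=> i lt_iK; apply: ab; apply: leq_trans lt_iK (leq_trans _ (leq_addr _ _)).
  exact: (leq_bigmax (a (size w))).
have [n xn] : exists n, forall a, prefix_of (firstn x n) a -> `|f x - f a| < e / 2.
  by apply: dcontinuous_cylinder => //; lra.
exists n, 0%N => a b xa xb _.
have := xn a xa; have := xn b xb; have := ler_distD (f x) (f a) (f b).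
rewrite (distrC (f a) (f x)); lra.
Qed.

Lemma dcontinuous_bounded (R : realType) k (f : Sigma k -> R) :
  dcontinuous f -> exists M : R, forall a, `|f a| <= M.
Proof.
move=> fc; have [K fK] := dcontinuous_unif fc (@ltr01 R).
pose ext (w : K.-tuple (Alph k)) : Sigma k := fun i => nth ord0 w i.
exists (\sum_(w : K.-tuple (Alph k)) `|f (ext w)| + 1) => a.
pose w := [tuple a i | i < K].
have a_w : `|f a - f (ext w)| <= 1.
  by apply: fK => i lt_iK; rewrite /ext -[i]/(val (Ordinal lt_iK)) nth_mktuple.
have w_le : `|f (ext w)| <= \sum_(w : K.-tuple (Alph k)) `|f (ext w)|.
  by rewrite (bigD1 w) //= lerDl sumr_ge0.
have := ler_distD (f (ext w)) (f a) 0; rewrite !subr0; lra.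
Qed.

Lemma size_flatten_nseq (T : Type) n (w : seq T) :
  size (flatten (nseq n w)) = (n * size w)%N.
Proof. by elim: n => //= n IH; rewrite size_cat IH mulSn. Qed.

Lemma nth_flatten_nseq (T : Type) (d : T) n (w : seq T) j r :
  (j < n)%N -> (r < size w)%N ->
  nth d (flatten (nseq n w)) (j * size w + r) = nth d w r.
Proof.
move=> + lt_rw; elim: n j => [//|n IH] [|j] lt_jn /=.
  by rewrite nth_cat lt_rw.
by rewrite nth_cat mulSn -addnA ltnNge leq_addr /= addKn IH.
Qed.

Section Words.
Variables (k : nat) (C : nat -> seq (Alph k)) (A1 : seq (Alph k)) (y : Sigma k).
Local Notation L m := (size (Aword C A1 y m)).

Lemma size_Aword m : L m.+1 = (2 * L m + size (C m) + m.+1 * L m ^ 2)%N.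
Proof. by rewrite /= !size_cat size_flatten_nseq size_mkseq; lia. Qed.

Lemma nth_Aword m j r : (j < L m ^ 2)%N -> (r < m.+1)%N ->
  nth ord0 (Aword C A1 y m.+1) (L m + size (C m) + j * m.+1 + r)%N = y r.
Proof.
move=> lt_jL lt_rm /=; rewrite -!addnA nth_cat ltnNge leq_addr /= addKn.
have lt_jr : (j * m.+1 + r < L m ^ 2 * m.+1)%N.
  by apply: leq_trans (_ : j.+1 * m.+1 <= _)%N; rewrite ?leq_mul2r ?lt_jL ?orbT //; lia.
rewrite nth_cat size_cat size_flatten_nseq size_mkseq ltn_add2l lt_jr.
rewrite nth_cat ltnNge leq_addr /= addKn.
have lt_r : (r < size (mkseq y m.+1))%N by rewrite size_mkseq.
by move: (nth_flatten_nseq ord0 lt_jL lt_r); rewrite size_mkseq nth_mkseq.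
Qed.

Lemma shift_Aword_copy (x : Sigma k) m j r i :
  (forall m, prefix_of (Aword C A1 y m) x) -> (j < L m ^ 2)%N -> (r + i < m.+1)%N ->
  iter (L m + size (C m) + j * m.+1 + r) (@Defs.shift k) x i = iter r (@Defs.shift k) y i.
Proof.
move=> x_pre lt_jL lt_ri; rewrite !iter_shiftE (addnC i r) -(nth_Aword lt_jL lt_ri).
have -> : (i + (L m + size (C m) + j * m.+1 + r) =
    L m + size (C m) + j * m.+1 + (r + i))%N by lia.
apply: x_pre; rewrite size_Aword.
have : (j * m.+1 + (r + i) < L m ^ 2 * m.+1)%N.
  by apply: leq_trans (_ : j.+1 * m.+1 <= _)%N; rewrite ?leq_mul2r ?lt_jL ?orbT //; lia.
lia.
Qed.

Lemma size_Aword_incr : (0 < size A1)%N -> forall m, (L m < L m.+1)%N.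
Proof.
move=> A1_gt0; have L_gt0 m : (0 < L m)%N by elim: m => // m IH; rewrite size_Aword; lia.
by move=> m; rewrite size_Aword; have := L_gt0 m; lia.
Qed.

End Words.

Lemma sum_nat_shift (R : zmodType) (H : nat -> R) s p :
  \sum_(s <= i < s + p) H i = \sum_(i < p) H (s + i)%N.
Proof.
rewrite -{1}(add0n s) big_addn addnC addnK big_mkord.
by apply: eq_bigr => i _; rewrite addnC.
Qed.

Lemma norm_sum_nat_le (R : numDomainType) (H : nat -> R) (B : R) a b :
  (forall i, (a <= i < b)%N -> `|H i| <= B) ->
  `|\sum_(a <= i < b) H i| <= (b - a)%:R * B.
Proof.
move=> HB; apply: le_trans (ler_norm_sum _ _ _) _.
by rewrite mulr_natl -sumr_const_nat; apply: ler_sum_nat.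
Qed.

Lemma norm_sum_cat_le (R : numDomainType) (H : nat -> R) a b c : (a <= b <= c)%N ->
  `|\sum_(a <= i < c) H i| <= `|\sum_(a <= i < b) H i| + `|\sum_(b <= i < c) H i|.
Proof. by case/andP => ab bc; rewrite (big_cat_nat ab bc) ler_normD. Qed.

(* F and G stand for the values of f along the orbits of T y and of y,
   L n = |A_(n+1)| and c n = |C_(n+1)|; F_copies says that along each copy of
   Y_(n+1) inside A_(n+2) the orbit of T y follows that of y up to an error e,
   except in the last K steps of the copy. *)
Section AveragingEstimate.
Variables (R : realType) (F G : nat -> R) (M e : R) (K : nat) (L c : nat -> nat).
Hypothesis F_le : forall i, `|F i| <= M.
Hypothesis G_le : forall i, `|G i| <= M.
Hypothesis L0_gt0 : (0 < L 0)%N.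
Hypothesis L_rec : forall n, L n.+1 = (2 * L n + c n + n.+1 * L n ^ 2)%N.
Hypothesis F_copies : forall n j r, (j < L n ^ 2)%N -> (r + K <= n.+1)%N ->
  `|F (L n + c n + j * n.+1 + r)%N - G r| <= e.

Lemma L_gt0 n : (0 < L n)%N.
Proof. by elim: n => // n IH; rewrite L_rec; lia. Qed.

Lemma L_gt n : (n < L n)%N.
Proof. by elim: n => // n IH; rewrite L_rec; lia. Qed.

Lemma M_ge0 : 0 <= M.
Proof. exact: le_trans (normr_ge0 _) (F_le 0). Qed.

Lemma e_ge0 : 0 <= e.
Proof.
apply: le_trans (normr_ge0 _) (F_copies (n := K) (j := 0) (r := 0) _ _) => //.
by rewrite expn_gt0 L_gt0.
Qed.

Lemma copy_sum_le n j : (j < L n ^ 2)%N ->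
  `|\sum_(r < n.+1) (F (L n + c n + j * n.+1 + r)%N - G r)|
    <= n.+1%:R * e + K%:R * (2 * M).
Proof.
move=> lt_jL.
rewrite -(big_mkord xpredT (fun r => F (L n + c n + j * n.+1 + r)%N - G r)).
have FG_le r : `|F (L n + c n + j * n.+1 + r)%N - G r| <= 2 * M.
  apply: le_trans (ler_normB _ _) _.
  by move: (F_le (L n + c n + j * n.+1 + r)%N) (G_le r); lra.
apply: le_trans (norm_sum_cat_le _ (_ : 0 <= n.+1 - K <= n.+1)%N) _.
  by rewrite leq_subr.
apply: lerD.
  apply: le_trans (norm_sum_nat_le (B := e) _) _ => [r /andP [_ lt_r]|].
    by apply: F_copies => //; lia.
  by rewrite ler_wpM2r ?e_ge0 // ler_nat; lia.
apply: le_trans (norm_sum_nat_le (B := 2 * M) _) _ => [r _|]; first exact: FG_le.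
by rewrite ler_wpM2r ?mulr_ge0 ?M_ge0 // ler_nat; lia.
Qed.

Lemma split_blocks n t : (L n.+1 + c n.+1 <= t < L n.+2)%N ->
  exists J, [/\ (J <= L n.+1 ^ 2)%N, (L n.+1 + c n.+1 + J * n.+2 <= t)%N &
    ((t - (L n.+1 + c n.+1 + J * n.+2)) * n.+1 <= t)%N].
Proof.
set s := (L n.+1 + c n.+1)%N; case/andP => st tL.
have Ln := L_gt n; have Ln1 := L_gt n.+1.
have sq_le m : (L m <= L m ^ 2)%N by rewrite expnS expn1 leq_pmulr // L_gt0.
have nn_t : (n.+1 * n.+1 <= t)%N.
  apply: leq_trans (leq_mul (leqnn _) (leq_trans Ln (sq_le n))) _.
  by apply: leq_trans st; rewrite /s L_rec; lia.
have [le_qL|lt_Lq] := leqP ((t - s) %/ n.+2)%N (L n.+1 ^ 2).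
  exists ((t - s) %/ n.+2)%N; split => //.
    by move: (leq_divM (t - s)%N n.+2); lia.
  have := ltn_pmod (t - s)%N (ltn0Sn n.+1); have := divn_eq (t - s)%N n.+2.
  move=> tsE lt_mod; have -> : (t - (s + (t - s) %/ n.+2 * n.+2) = (t - s) %% n.+2)%N by lia.
  by apply: leq_trans nn_t; rewrite leq_mul2r -ltnS lt_mod orbT.
have Lsq_t : (L n.+1 ^ 2 * n.+2 <= t - s)%N by move/ltnW: lt_Lq; rewrite leq_divRL.
exists (L n.+1 ^ 2)%N; split => //; first lia.
have rem_lt : (t - (s + L n.+1 ^ 2 * n.+2) < L n.+1)%N.
  by move: tL; rewrite L_rec /s; lia.
apply: leq_trans (_ : L n.+1 * n.+1 <= _)%N; first by rewrite leq_mul2r ltnW ?orbT.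
apply: leq_trans (_ : L n.+1 * L n.+1 <= _)%N; first by rewrite leq_mul2l ltnW ?orbT.
nia.
Qed.

Section Deviation.
Variable nu : R.
Hypothesis nu_le : `|nu| <= M.

Lemma F_dev_le i : `|F i - nu| <= 2 * M.
Proof. by apply: le_trans (ler_normB _ _) _; move: (F_le i) nu_le; lra. Qed.

Lemma blocks_dev_le n J : (J <= L n ^ 2)%N ->
  `|\sum_(L n + c n <= i < L n + c n + J * n.+1) (F i - nu)| <=
  J%:R * (n.+1%:R * e + K%:R * (2 * M) + `|\sum_(r < n.+1) G r - n.+1%:R * nu|).
Proof.
elim: J => [|J IH] le_JL; first by rewrite mul0n addn0 big_geq // normr0 mul0r.
apply: le_trans (norm_sum_cat_le _ (_ : _ <= L n + c n + J * n.+1 <= _)%N) _.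
  by rewrite leq_addr leq_add2l leq_mul2r leqnSn orbT.
rewrite -natr1 mulrDl mul1r lerD ?IH 1?ltnW // mulSnr addnA sum_nat_shift.
have -> : \sum_(r < n.+1) (F (L n + c n + J * n.+1 + r)%N - nu) =
    \sum_(r < n.+1) (F (L n + c n + J * n.+1 + r)%N - G r) +
    (\sum_(r < n.+1) G r - n.+1%:R * nu).
  by rewrite !sumrB sumr_const card_ord mulr_natl addrA subrK.
by apply: le_trans (ler_normD _ _) _; rewrite lerD2r copy_sum_le.
Qed.

Lemma level_dev_le n : `|\sum_(r < n.+1) G r - n.+1%:R * nu| <= 2 * M ->
  `|\sum_(0 <= i < L n.+1) (F i - nu)| <=
  (2 * L n + c n)%:R * (2 * M) + (L n ^ 2)%:R * (n.+1%:R * e + K%:R * (2 * M) + 2 * M).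
Proof.
move=> G_dev; set s := (L n + c n)%N; set u := (s + L n ^ 2 * n.+1)%N.
have Lu : (L n.+1 - u = L n)%N by rewrite L_rec /u /s; lia.
apply: le_trans (norm_sum_cat_le _ (_ : 0 <= u <= L n.+1)%N) _.
  by rewrite L_rec /u /s; lia.
apply: le_trans (lerD (norm_sum_cat_le _ (_ : 0 <= s <= u)%N) (lexx _)) _.
  by rewrite /u leq_addr.
apply: le_trans (lerD (lerD (norm_sum_cat_le _ (_ : 0 <= L n <= s)%N) (lexx _)) (lexx _)) _.
  by rewrite /s leq_addr.
have crude a b := @norm_sum_nat_le _ (fun i => F i - nu) _ a b (fun i _ => F_dev_le i).
have blocks : `|\sum_(s <= i < u) (F i - nu)| <=
    (L n ^ 2)%:R * (n.+1%:R * e + K%:R * (2 * M) + 2 * M).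
  apply: le_trans (blocks_dev_le (leqnn _)) _.
  by rewrite ler_wpM2l // lerD2l.
apply: le_trans (lerD (lerD (lerD (crude _ _) (crude _ _)) blocks) (crude _ _)) _.
rewrite Lu subn0 /s addKn !natrD natrM; lra.
Qed.

Lemma partial_level_dev_le n t : \sum_(r < n.+2) G r = n.+2%:R * nu ->
  (L n.+1 <= t < L n.+2)%N ->
  `|\sum_(L n.+1 <= i < t) (F i - nu)| <=
  (c n.+1)%:R * (2 * M) + t%:R * e + t%:R / n.+1%:R * (K%:R * (2 * M) + 2 * M).
Proof.
move=> G_mean /andP [Lt tL]; set s := (L n.+1 + c n.+1)%N.
have crude a b := @norm_sum_nat_le _ (fun i => F i - nu) _ a b (fun i _ => F_dev_le i).
have M_ge0 := M_ge0; have e_ge0 := e_ge0.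
have Q_ge0 : 0 <= t%:R / n.+1%:R :> R by rewrite divr_ge0.
have KM_ge0 : 0 <= K%:R * (2 * M) by rewrite mulr_ge0 ?mulr_ge0.
have [ts|st] := leqP t s.
  apply: le_trans (crude _ _) _; rewrite -addrA; apply: ler_wpDr.
    by rewrite addr_ge0 ?mulr_ge0 // addr_ge0 ?mulr_ge0.
  by rewrite ler_wpM2r ?mulr_ge0 // ler_nat; lia.
have /split_blocks [J [le_JL le_Jt rem_le]] : (s <= t < L n.+2)%N by rewrite ltnW.
set u := (s + J * n.+2)%N in le_Jt rem_le.
apply: le_trans (norm_sum_cat_le _ (_ : L n.+1 <= s <= t)%N) _.
  by rewrite leq_addr ltnW.
apply: le_trans (lerD (lexx _) (norm_sum_cat_le _ (_ : s <= u <= t)%N)) _.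
  by rewrite leq_addr le_Jt.
have blocks := blocks_dev_le le_JL; rewrite G_mean subrr normr0 addr0 in blocks.
apply: le_trans (lerD (crude _ _) (lerD blocks (crude _ _))) _.
rewrite /s addKn -addrA lerD2l.
have n1_gt0 : 0 < n.+1%:R :> R by rewrite ltr0n.
have Jp_le : J%:R * n.+2%:R <= t%:R :> R by rewrite -natrM ler_nat; lia.
have J_le : J%:R <= t%:R / n.+1%:R :> R by rewrite ler_pdivlMr // -natrM ler_nat; nia.
have rem_le' : (t - u)%:R <= t%:R / n.+1%:R :> R by rewrite ler_pdivlMr // -natrM ler_nat.
have := ler_wpM2r e_ge0 Jp_le; have := ler_wpM2r KM_ge0 J_le.
have M2_ge0 : 0 <= 2 * M by lra.
have := ler_wpM2r M2_ge0 rem_le'.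
by move: (t%:R / n.+1%:R) n.+2%:R => Q p; lra.
Qed.

End Deviation.

Lemma norm_sumG_le m : `|\sum_(i < m) G i| <= m%:R * M.
Proof.
apply: le_trans (ler_norm_sum _ _ _) _.
have -> : m%:R * M = \sum_(i < m) M by rewrite sumr_const card_ord mulr_natl.
by apply: ler_sum => i _; apply: G_le.
Qed.

Lemma mean_le m : `|m%:R^-1 * \sum_(i < m) G i| <= M.
Proof.
case: m => [|m]; first by rewrite big_ord0 mulr0 normr0 M_ge0.
by rewrite normrM ger0_norm // ler_pdivrMl ?ltr0Sn // norm_sumG_le.
Qed.

Lemma mean_prefix_dev_le n :
  `|\sum_(r < n.+1) G r - n.+1%:R * (n.+2%:R^-1 * \sum_(i < n.+2) G i)| <= 2 * M.
Proof.
rewrite [\sum_(i < n.+2) _]big_ord_recr /=; have S_le := norm_sumG_le n.+1; have g_le := G_le n.+1.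
move: (\sum_(i < n.+1) G i) (G n.+1) S_le g_le => S g S_le g_le.
have n2E : n.+2%:R = n.+1%:R + 1 :> R by rewrite -natr1.
have n1_ge0 : 0 <= n.+1%:R :> R by [].
have -> : S - n.+1%:R * (n.+2%:R^-1 * (S + g)) = n.+2%:R^-1 * (S - n.+1%:R * g).
  by rewrite n2E; field; apply: lt0r_neq0; have := ler0n R n; lra.
rewrite normrM ger0_norm // ler_pdivrMl ?ltr0Sn //.
apply: le_trans (ler_normB _ _) _; rewrite normrM normr_nat n2E.
have := ler_wpM2l n1_ge0 g_le; have := M_ge0; lra.
Qed.

Lemma ratio_le m t : (L m <= t)%N -> (c m)%:R <= (c m)%:R / (L m)%:R * t%:R :> R.
Proof.
move=> Lmt; have Lm_gt0 : 0 < (L m)%:R :> R by rewrite ltr0n L_gt0.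
by rewrite -mulrA ler_peMr // ler_pdivlMl // mulr1 ler_nat.
Qed.

Lemma sum_dev_le n t : (L n.+1 <= t < L n.+2)%N ->
  `|\sum_(0 <= i < t) (F i - n.+2%:R^-1 * \sum_(i < n.+2) G i)| <=
  t%:R * (2 * e + (8 * M + 4 * M * K%:R) / n.+1%:R
          + 2 * M * ((c n)%:R / (L n)%:R + (c n.+1)%:R / (L n.+1)%:R)).
Proof.
move=> /[dup] t_in /andP [Lt _]; set nu := n.+2%:R^-1 * _.
have G_mean : \sum_(r < n.+2) G r = n.+2%:R * nu.
  by rewrite /nu mulrA mulfV ?mul1r ?pnatr_eq0.
apply: le_trans (norm_sum_cat_le _ (_ : 0 <= L n.+1 <= t)%N) _; first by [].
apply: le_trans (lerD (level_dev_le (mean_le n.+2) (mean_prefix_dev_le n))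
                      (partial_level_dev_le (mean_le n.+2) G_mean t_in)) _.
have n1_gt0 : 0 < n.+1%:R :> R by rewrite ltr0n.
have sq_t : (n.+1 * L n ^ 2 <= t)%N by move: Lt; rewrite L_rec; lia.
have Ln_sq : (L n <= L n ^ 2)%N by rewrite expnS expn1 leq_pmulr // L_gt0.
have Ln_t : (L n <= t)%N by apply: leq_trans Ln_sq (leq_trans _ sq_t); rewrite leq_pmull.
have Ln_Q : (L n)%:R <= t%:R / n.+1%:R :> R.
  by rewrite ler_pdivlMr // -natrM ler_nat mulnC (leq_trans _ sq_t) ?leq_mul2l ?Ln_sq ?orbT.
have Ln2_Q : (L n ^ 2)%:R <= t%:R / n.+1%:R :> R.
  by rewrite ler_pdivlMr // -natrM ler_nat mulnC.
have Ln2_t : (L n ^ 2)%:R * n.+1%:R <= t%:R :> R by rewrite -natrM ler_nat mulnC.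
have M2_ge0 : 0 <= 2 * M by have := M_ge0; lra.
have KM_ge0 : 0 <= K%:R * (2 * M) + 2 * M by apply: addr_ge0 => //; apply: mulr_ge0.
have := ler_wpM2r M2_ge0 (ratio_le Ln_t); have := ler_wpM2r M2_ge0 (ratio_le Lt).
have := ler_wpM2r M2_ge0 Ln_Q; have := ler_wpM2r e_ge0 Ln2_t.
have := ler_wpM2r KM_ge0 Ln2_Q.
have -> : t%:R * (2 * e + (8 * M + 4 * M * K%:R) / n.+1%:R
    + 2 * M * ((c n)%:R / (L n)%:R + (c n.+1)%:R / (L n.+1)%:R)) =
  2 * (t%:R * e) + (8 * M + 4 * M * K%:R) * (t%:R / n.+1%:R)
    + (c n)%:R / (L n)%:R * t%:R * (2 * M) + (c n.+1)%:R / (L n.+1)%:R * t%:R * (2 * M).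
  by ring.
rewrite natrD natrM.
move: (t%:R / n.+1%:R) ((c n)%:R / (L n)%:R * t%:R) ((c n.+1)%:R / (L n.+1)%:R * t%:R).
by move=> Q a b; lra.
Qed.

Lemma avg_dev_le n t : (L n.+1 <= t < L n.+2)%N ->
  `|t%:R^-1 * \sum_(i < t) F i - n.+2%:R^-1 * \sum_(i < n.+2) G i| <=
  2 * e + (8 * M + 4 * M * K%:R) / n.+1%:R
  + 2 * M * ((c n)%:R / (L n)%:R + (c n.+1)%:R / (L n.+1)%:R).
Proof.
move=> /[dup] t_in /andP [Lt _]; set nu := n.+2%:R^-1 * _.
have t_gt0 : 0 < t%:R :> R by rewrite ltr0n (leq_trans (L_gt0 _) Lt).
have -> : t%:R^-1 * \sum_(i < t) F i - nu = t%:R^-1 * \sum_(0 <= i < t) (F i - nu).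
  by rewrite big_mkord sumrB sumr_const card_ord mulrBr -[nu *+ t]mulr_natl mulKf ?gt_eqF.
by rewrite normrM ger0_norm ?invr_ge0 ?ler0n // ler_pdivrMl // sum_dev_le.
Qed.

End AveragingEstimate.

Lemma Aword_avg_close (R : realType) k (C : nat -> seq (Alph k)) (A1 : seq (Alph k))
    (x y : Sigma k) (f : Sigma k -> R) :
  (0 < size A1)%N -> (forall m, prefix_of (Aword C A1 y m) x) ->
  (fun m => (size (C m))%:R / (size (Aword C A1 y m))%:R : R) @ \oo --> 0 ->
  dcontinuous f ->
  forall d : R, 0 < d -> exists N, forall m t, (N <= m)%N ->
    (size (Aword C A1 y m) <= t < size (Aword C A1 y m.+1))%N ->
    `|empirical_avg f x t - empirical_avg f y m.+1| <= d.
Proof.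
move=> A1_gt0 x_pre cL0 fc d d_gt0.
pose L m := size (Aword C A1 y m); pose c m := size (C m).
have [K fK] : exists K, forall a b : Sigma k,
    (forall i, (i < K)%N -> a i = b i) -> `|f a - f b| <= d / 4.
  by apply: dcontinuous_unif => //; lra.
have [M fM] := dcontinuous_bounded fc.
pose F i := f (iter i (@Defs.shift k) x); pose G i := f (iter i (@Defs.shift k) y).
have copies n j r : (j < L n ^ 2)%N -> (r + K <= n.+1)%N ->
    `|F (L n + c n + j * n.+1 + r)%N - G r| <= d / 4.
  by move=> lt_jL rK; apply: fK => i lt_iK; apply: shift_Aword_copy => //; lia.
have delta0 : (fun n => (8 * M + 4 * M * K%:R) / n.+1%:R
    + 2 * M * ((c n)%:R / (L n)%:R + (c n.+1)%:R / (L n.+1)%:R)) @ \oo --> 0.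
  have cL1 : (fun n => (c n.+1)%:R / (L n.+1)%:R : R) @ \oo --> 0.
    by rewrite (cvg_shiftS (fun n => (c n)%:R / (L n)%:R : R)).
  rewrite -[0](addr0 0) -{2}(mulr0 (2 * M)) -[X in 2 * M * X](addr0 0).
  apply: cvgD; last by apply: cvgMr; apply: cvgD.
  by rewrite -(mulr0 (8 * M + 4 * M * K%:R)); apply: cvgMr; exact: cvg_harmonic.
have d2_gt0 : 0 < d / 2 by lra.
move/cvgr0Pnorm_le : delta0 => /(_ _ d2_gt0) [N _ delta_le].
exists N.+1 => [[|n]] // t /[!ltnS] Nn t_in.
have := avg_dev_le (F := F) (G := G) (L := L) (c := c) (fun i => fM _) (fun i => fM _)
  A1_gt0 (size_Aword C A1 y) copies t_in.
have delta_n : (8 * M + 4 * M * K%:R) / n.+1%:R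
    + 2 * M * ((c n)%:R / (L n)%:R + (c n.+1)%:R / (L n.+1)%:R) <= d / 2.
  exact: le_trans (ler_norm _) (delta_le n Nn).
move=> /le_trans; apply.
by rewrite -addrA; apply: le_trans (lerD (lexx _) delta_n) _; lra.
Qed.

Lemma id_leq_incr (phi : nat -> nat) : (forall j, (phi j < phi j.+1)%N) ->
  forall j, (j <= phi j)%N.
Proof. by move=> phiS; elim=> // j IH; exact: leq_ltn_trans IH (phiS j). Qed.

Lemma incr_cvgny (phi : nat -> nat) : (forall j, (phi j < phi j.+1)%N) ->
  phi @ \oo --> \oo.
Proof.
move=> phiS; apply/cvgnyPge => A.
by exists A => // j /= Aj; exact: leq_trans Aj (id_leq_incr phiS j).
Qed.

Lemma exists_incr_subseq (w : nat -> nat) : w @ \oo --> \oo ->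
  exists g : nat -> nat,
    (forall j, (g j < g j.+1)%N) /\ (forall j, (w (g j) < w (g j.+1))%N).
Proof.
move/cvgnyPgt => w_oo.
have next a : exists b, (a < b)%N /\ (w a < w b)%N.
  have [J _ wJ] := w_oo (w a); exists (maxn J a.+1).
  by rewrite leq_max leqnn orbT; split => //; apply: wJ; rewrite /= leq_maxl.
have [h hP] := choice next.
by exists (fun j => iter j h 0%N); split => j; case: (hP (iter j h 0%N)).
Qed.

Lemma cvg_EFin_close (R : realType) (u v : nat -> R) (l : \bar R) :
  (fun j => (u j)%:E) @ \oo --> l -> (fun j => u j - v j) @ \oo --> 0 ->
  (fun j => (v j)%:E) @ \oo --> l.
Proof.
move=> ul uv0.
have vu0 : (fun j => (v j - u j)%:E) @ \oo --> 0%:E.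
  apply: cvg_EFin; first exact: nearW.
  by rewrite -oppr0; under eq_fun do rewrite -opprB; exact: cvgN.
suff -> : (fun j => (v j)%:E) = (fun j => (u j)%:E + (v j - u j)%:E)%E.
  by rewrite -[l]adde0; apply: cvgeD => //; exact: fin_num_adde_defl.
by apply/funext => j; rewrite -EFinD addrC subrK.
Qed.

Section EmpiricalLimits.
Variables (R : realType) (k : nat).

Lemma Vset_sub (x y : Sigma k) :
  (forall phi : nat -> nat, (forall j, (phi j < phi j.+1)%N) ->
    exists g psi : nat -> nat, [/\ forall j, (g j < g j.+1)%N,
      forall j, (psi j < psi j.+1)%N &
      forall f : Sigma k -> R, dcontinuous f ->
        (fun j => empirical_avg f x (phi (g j)) - empirical_avg f y (psi j)) @ \oo --> 0]) ->
  @Vset R k x `<=` @Vset R k y.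
Proof.
move=> sub mu [phi [phiS mu_phi]]; have [g [psi [gS psiS close]]] := sub phi phiS.
exists psi; split => // f fc; apply: cvg_EFin_close (close f fc).
exact: cvg_comp (incr_cvgny gS) (mu_phi f fc).
Qed.

Variables (x y : Sigma k) (L : nat -> nat).
Hypothesis L_incr : forall m, (L m < L m.+1)%N.
Hypothesis avg_close : forall f : Sigma k -> R, dcontinuous f ->
  forall d : R, 0 < d -> exists N, forall m t, (N <= m)%N ->
    (L m <= t < L m.+1)%N -> `|empirical_avg f x t - empirical_avg f y m.+1| <= d.

Lemma exists_window_index : exists w : nat -> nat,
  (forall t, (L 0 <= t)%N -> (L (w t) <= t < L (w t).+1)%N) /\
  (forall N t, (L N <= t)%N -> (N <= w t)%N).
Proof.
have L_mono := leq_mono (homo_ltn ltn_trans L_incr).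
have window t : exists m, (L 0 <= t)%N -> (L m <= t < L m.+1)%N.
  have [L0t|] := leqP (L 0) t; last by exists 0%N.
  have Lm_t : exists m, (L m <= t)%N by exists 0%N.
  have Lm_le m : (L m <= t)%N -> (m <= t)%N by apply: leq_trans (id_leq_incr L_incr m).
  case: (ex_maxnP Lm_t Lm_le) => m Lm maxm; exists m => _; rewrite Lm ltnNge /=.
  by apply/negP => /maxm; rewrite ltnn.
have [w wP] := choice window; exists w; split => // N t LNt.
have /andP [_ tL] : (L (w t) <= t < L (w t).+1)%N.
  by apply: wP; apply: leq_trans LNt; rewrite L_mono.
by rewrite -ltnS -(leqW_mono L_mono); exact: leq_ltn_trans LNt tL.
Qed.

Lemma Vset_windows : @Vset R k x = @Vset R k y.
Proof.
have L_mono := leq_mono (homo_ltn ltn_trans L_incr).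
have [w [wP w_ge]] := exists_window_index.
apply/seteqP; split; apply: Vset_sub => phi phiS.
- have w_oo : (w \o phi) @ \oo --> \oo.
    apply/cvgnyPge => A; have /cvgnyPge /(_ (L A)) := incr_cvgny phiS.
    by apply: filterS => j /w_ge.
  have [g [gS wgS]] := exists_incr_subseq w_oo.
  exists g, (fun j => (w (phi (g j))).+1); split => // f fc.
  apply/cvgr0Pnorm_le => d d_gt0; have [N cl] := avg_close fc d_gt0.
  have phig_oo : (phi \o g) @ \oo --> \oo.
    by apply: cvg_comp (incr_cvgny phiS); exact: incr_cvgny.
  have /cvgnyPge /(_ (L N)) := phig_oo.
  apply: filterS => j /= LNj; apply: cl; first exact: w_ge.
  by apply: wP; apply: leq_trans LNj; rewrite L_mono.
- exists succn, (fun j => L (phi j.+1).-1); split => // [j|f fc].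
    by rewrite (leqW_mono L_mono); move: (phiS j) (phiS j.+1); lia.
  apply/cvgr0Pnorm_le => d d_gt0; have [N cl] := avg_close fc d_gt0.
  exists N => // j /= Nj; have phi_gt0 : (0 < phi j.+1)%N by move: (phiS j); lia.
  rewrite distrC -[in empirical_avg f y _](prednK phi_gt0); apply: cl.
    by move: (id_leq_incr phiS j.+1); lia.
  by rewrite leqnn L_incr.
Qed.

End EmpiricalLimits.

Theorem proposition3p5 (R : realType) (k : nat) (hk : (2 <= k)%N)
  (Pi : set (Sigma k)) (hPi : subshift R Pi) (hproper : Pi <> setT)
  (C : nat -> seq (Alph k))
  (hC_in : forall n, contained Pi (C n))
  (hC_onto : forall w, contained Pi w -> exists n, C n = w)
  (hC_inj : injective C)
  (A1 : seq (Alph k)) (hA1 : ~ contained Pi A1)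
  (hgrowth : forall y, Pi y ->
     (fun m => (size (C m))%:R / (size (Aword C A1 y m))%:R : R) @ \oo --> 0)
  (T : Sigma k -> Sigma k)
  (hT : forall y, Pi y -> forall m, prefix_of (Aword C A1 y m) (T y)) :
  forall y, Pi y -> @Vset R k (T y) = @Vset R k y.
Proof.
move=> y Py.
have A1_gt0 : (0 < size A1)%N.
  case: hPi => [[z Pz] _ _]; rewrite lt0n size_eq0; apply/negP => /eqP A1E.
  by apply: hA1; rewrite A1E; exists z.
apply: (Vset_windows (L := fun m => size (Aword C A1 y m))).
  exact: size_Aword_incr.
by move=> f fc; apply: Aword_avg_close (hT y Py) (hgrowth y Py) fc.
Qed.
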